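(* Let $G=(V,E)$ be a circular arc graph which is not an interval graph, let $M=(C,\mathcal A)$ be a circular arc model of $G$, let $p$ be any point of $C$, let $A$ be the set of vertices whose arcs contain $p$, and let $B=V\setminus A$. Let $G'=(V,E')$ with $E'=E\cup\{\{u',v'\}: u',v'\in B,\ u'\neq v'\}$. Then $G'$ is a co-bipartite circular arc graph.
   Context: A circular arc model $M=(C,\mathcal A)$ of $G$ consists of a circle $C$ and arcs of $C$, one per vertex, such that two vertices are adjacent iff their arcs intersect; a circular arc graph is a graph having such a model. An interval graph is the intersection graph of a finite family of intervals of the real line. A graph is co-bipartite if its vertex set can be partitioned into two cliques. *)

From mathcomp Require Import all_boot all_order all_algebra.
From mathcomp Require Import boolp reals.
Set Implicit Arguments. Unset Strict Implicit. Unset Printing Implicit Defensive.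
Import Order.TTheory GRing.Theory Num.Theory.
Local Open Scope ring_scope.

Definition simple_graph (T : finType) (e : rel T) : Prop :=
  irreflexive e /\ symmetric e.

(* The circle C is R/Z; a point of C is represented by any real (mod 1).
   A (closed) arc is a pair (s, l) with 0 <= l <= 1: the set of points
   x such that x + k lies in [s, s + l] for some integer k
   (counterclockwise from s, length l; l = 1 is the whole circle). *)
Definition carc (R : realType) := (R * R)%type.

Definition valid_arc (R : realType) (a : carc R) : Prop :=
  0 <= a.2 <= 1.

Definition on_arc (R : realType) (x : R) (a : carc R) : Prop :=
  exists k : int, a.1 <= x + k%:~R <= a.1 + a.2.

Definition arcs_meet (R : realType) (a b : carc R) : Prop :=
  exists x : R, on_arc x a /\ on_arc x b.

Definition ca_model (R : realType) (T : finType) (e : rel T)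
    (M : T -> carc R) : Prop :=
  (forall v, valid_arc (M v)) /\
  (forall u v, u != v -> (e u v <-> arcs_meet (M u) (M v))).

Definition circular_arc_graph (T : finType) (e : rel T) : Prop :=
  exists (R : realType) (M : T -> carc R), ca_model e M.

Definition interval_graph (T : finType) (e : rel T) : Prop :=
  exists (R : realType) (I : T -> R * R),
    (forall v, (I v).1 <= (I v).2) /\
    (forall u v, u != v ->
       (e u v <-> exists x : R, (I u).1 <= x <= (I u).2 /\ (I v).1 <= x <= (I v).2)).

Definition is_clique (T : finType) (e : rel T) (S : {set T}) : Prop :=
  forall u v, u \in S -> v \in S -> u != v -> e u v.

Definition cobipartite (T : finType) (e : rel T) : Prop :=
  exists S : {set T}, is_clique e S /\ is_clique e (~: S).

Definition add_clique (T : finType) (e : rel T) (B : {set T}) : rel T :=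
  fun u v => e u v || [&& u != v, u \in B & v \in B].

From mathcomp Require Import all_boot all_order all_algebra.
From mathcomp Require Import boolp reals.
From mathcomp Require Import lra zify.
Set Implicit Arguments. Unset Strict Implicit. Unset Printing Implicit Defensive.
Import Order.TTheory GRing.Theory Num.Theory.
Local Open Scope ring_scope.

(* Rotate the circle so that p sits at 0 and every arc starts in (-1, 0].
   The arcs through 0 then lie within distance 1 of it and the other arcs
   inside (-1, 0) = (0, 1) mod 1.  Shrinking everything by a factor 3 and
   prolonging each arc not through 0 by 2/3 past its end keeps every
   intersection between an arc through 0 and one not through 0, while all the
   prolonged arcs now share the point 1/2: this is a circular arc model of the
   graph in which the vertices outside A form a clique. *)

Section ArcArithmetic.
Variable R : realType.
Implicit Types (a b : carc R) (x t : R).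

Definition arc_shift t a : carc R := (a.1 + t, a.2).

Lemma on_arc_shift x t a : on_arc (x + t) (arc_shift t a) <-> on_arc x a.
Proof.
by split=> -[k /andP[h1 h2]]; exists k; apply/andP; move: h1 h2 => /= h1 h2;
  split; lra.
Qed.

Lemma on_arc_turn x (k : int) a : on_arc x (arc_shift k%:~R a) <-> on_arc x a.
Proof.
split=> -[j /andP[h1 h2]]; move: h1 h2 => /= h1 h2.
- by exists (j - k); rewrite intrB; apply/andP; rewrite /=; split; lra.
- by exists (j + k); rewrite intrD; apply/andP; rewrite /=; split; lra.
Qed.

Lemma arcs_meet_shift t a b :
  arcs_meet (arc_shift t a) (arc_shift t b) <-> arcs_meet a b.
Proof.
split=> -[x [ha hb]].
- by exists (x - t); rewrite -!(on_arc_shift (x - t) t) subrK.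
- by exists (x + t); rewrite !on_arc_shift.
Qed.

Lemma arcs_meet_turn (k l : int) a b :
  arcs_meet (arc_shift k%:~R a) (arc_shift l%:~R b) <-> arcs_meet a b.
Proof. by split=> -[x [ha hb]]; exists x; move: ha hb; rewrite !on_arc_turn. Qed.

Lemma arcs_meetC a b : arcs_meet a b <-> arcs_meet b a.
Proof. by split=> -[x [ha hb]]; exists x. Qed.

Lemma arcs_meetP a b : 0 <= a.2 -> 0 <= b.2 ->
  arcs_meet a b <->
  exists m : int, b.1 + m%:~R <= a.1 + a.2 /\ a.1 <= b.1 + b.2 + m%:~R.
Proof.
move=> a2_ge0 b2_ge0; split.
  move=> [x [[k /andP[h1 h2]] [j /andP[h3 h4]]]].
  by exists (k - j); rewrite intrB; split; lra.
move=> [m [h1 h2]].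
(* the later of the two starting points lies on both arcs *)
pose y := Num.max a.1 (b.1 + m%:~R).
have y_ge_a : a.1 <= y by rewrite le_max lexx.
have y_ge_b : b.1 + m%:~R <= y by rewrite le_max lexx orbT.
have y_le_a : y <= a.1 + a.2 by rewrite ge_max; apply/andP; split; lra.
have y_le_b : y <= b.1 + m%:~R + b.2 by rewrite ge_max; apply/andP; split; lra.
exists y; split.
- by exists 0; rewrite addr0; apply/andP; split; lra.
- by exists (- m); rewrite intrN; apply/andP; split; lra.
Qed.

Definition arc_normalize (p : R) a : carc R :=
  arc_shift (- Num.ceil (a.1 - p))%:~R (arc_shift (- p) a).

Lemma arc_normalize_start p a : -1 < (arc_normalize p a).1 <= 0.
Proof.
have /andP[h1 h2] := ceil_itv (a.1 - p).
by rewrite /= intrN; move: h1; rewrite intrB => h1; apply/andP; split; lra.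
Qed.

Lemma on_arc_normalize p a : on_arc p a <-> on_arc 0 (arc_normalize p a).
Proof. by rewrite on_arc_turn -(on_arc_shift p (- p)) subrr. Qed.

Lemma arcs_meet_normalize p a b :
  arcs_meet a b <-> arcs_meet (arc_normalize p a) (arc_normalize p b).
Proof. by rewrite arcs_meet_turn arcs_meet_shift. Qed.

Lemma on_arc0_normalized a : -1 < a.1 <= 0 -> (on_arc 0 a <-> - a.2 <= a.1).
Proof.
move=> /andP[a1_gt a1_le]; split=> [[k /andP[h1 h2]]|h].
  have k_gt : (-1 < k)%R by rewrite -(ltr_int R); lra.
  have : 0 <= k%:~R :> R by rewrite ler0z; lia.
  lra.
by exists 0; rewrite add0r; apply/andP; split; lra.
Qed.

Lemma int_in_window2 (m k : int) :
  k%:~R - 1 < m%:~R :> R -> m%:~R < k%:~R + 2 :> R -> m = k \/ m = k + 1.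
Proof.
rewrite -[1]/(1%:~R : R) -[2]/(2%:~R : R) -!intrB -!intrD !ltr_int.
lia.
Qed.

Definition shrink_arc a : carc R := (a.1 / 3, a.2 / 3).

Definition prolong_arc a : carc R := ((a.1 + 1) / 3, (2 + a.2) / 3).

Lemma valid_shrink_arc a : valid_arc a -> valid_arc (shrink_arc a).
Proof. by move=> /andP[h1 h2]; apply/andP; rewrite /=; split; lra. Qed.

Lemma valid_prolong_arc a : valid_arc a -> valid_arc (prolong_arc a).
Proof. by move=> /andP[h1 h2]; apply/andP; rewrite /=; split; lra. Qed.

Lemma on_arc0_shrink a : - a.2 <= a.1 -> a.1 <= 0 -> on_arc 0 (shrink_arc a).
Proof.
by move=> h1 h2; exists 0; rewrite add0r; apply/andP; rewrite /=; split; lra.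
Qed.

Lemma on_arc_half_prolong a : -1 < a.1 <= 0 -> 0 <= a.2 ->
  on_arc (1 / 2) (prolong_arc a).
Proof.
move=> /andP[h1 h2] h3; exists 0; rewrite addr0.
by apply/andP; rewrite /=; split; lra.
Qed.

Lemma arcs_meet_shrink_prolong a b :
  0 <= a.2 <= 1 -> - a.2 <= a.1 <= 0 ->
  -1 < b.1 -> 0 <= b.2 -> b.1 + b.2 < 0 ->
  arcs_meet a b <-> arcs_meet (shrink_arc a) (prolong_arc b).
Proof.
move=> /andP[a2_ge0 a2_le1] /andP[a1_ge a1_le0] b1_gt b2_ge0 b_end.
rewrite !arcs_meetP /=; try lra.
(* witness m on the left corresponds to m - 1 on the right *)
split=> -[m [h1 h2]].
- have [m_eq|m_eq] := @int_in_window2 m 0 (ltac:(lra)) (ltac:(lra)); rewrite m_eq in h1 h2.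
  + by exists (-1); split; lra.
  + by exists 0; split; lra.
- have [m_eq|m_eq] := @int_in_window2 m (-1) (ltac:(lra)) (ltac:(lra)); rewrite m_eq in h1 h2.
  + by exists 0; split; lra.
  + by exists 1; split; lra.
Qed.

End ArcArithmetic.

Lemma clique_on_arc (R : realType) (T : finType) (e : rel T)
    (M : T -> carc R) (p : R) :
  ca_model e M -> is_clique e [set v | `[< on_arc p (M v) >]].
Proof.
move=> [_ hM] u v; rewrite !inE => /asboolP hu /asboolP hv uv.
by apply/hM => //; exists p.
Qed.

Lemma add_clique_cobipartite (T : finType) (e : rel T) (A : {set T}) :
  is_clique e A -> cobipartite (add_clique e (~: A)).
Proof.
move=> cliqueA; exists A; split=> u v hu hv uv; apply/orP.
- by left; exact: cliqueA.
- by right; rewrite uv hu hv.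
Qed.

Section CompletionModel.
Variables (R : realType) (T : finType) (e : rel T) (N : T -> carc R).
Variable A : {set T}.
Hypothesis N_model : ca_model e N.
Hypothesis N_start : forall v, -1 < (N v).1 <= 0.
Hypothesis memA : forall v, v \in A <-> on_arc 0 (N v).

Definition completion_arc v :=
  if v \in A then shrink_arc (N v) else prolong_arc (N v).

Lemma memAE v : (v \in A) = (- (N v).2 <= (N v).1).
Proof.
by apply/idP/idP => [/memA | h]; [rewrite on_arc0_normalized | apply/memA;
  rewrite on_arc0_normalized].
Qed.

Lemma completion_arcs_meet u v : u \in A -> v \notin A ->
  arcs_meet (N u) (N v) <-> arcs_meet (completion_arc u) (completion_arc v).
Proof.
move=> uA vA; rewrite /completion_arc uA (negbTE vA).
have /andP[b1_gt _] := N_start v.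
have /andP[_ a1_le0] := N_start u.
have /andP[a2_ge0 a2_le1] := N_model.1 u.
have /andP[b2_ge0 _] := N_model.1 v.
move: uA vA; rewrite !memAE -ltNge => a1_ge b1_lt.
apply: arcs_meet_shrink_prolong => //; try apply/andP; try split; lra.
Qed.

Lemma completion_ca_model : ca_model (add_clique e (~: A)) completion_arc.
Proof.
split=> [v | u v uv].
  rewrite /completion_arc; case: ifP => _;
    [exact/valid_shrink_arc/N_model.1 | exact/valid_prolong_arc/N_model.1].
have eE : e u v <-> arcs_meet (N u) (N v) := N_model.2 u v uv.
rewrite /add_clique uv !in_setC /completion_arc.
have [/andP[_ u1_le0] /andP[_ v1_le0]] := (N_start u, N_start v).
case uA: (u \in A); case vA: (v \in A) => /=; rewrite ?orbF ?orbT.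
- split=> _; last by apply/eE; exists 0; split; apply/memA.
  by exists 0; split; apply: on_arc0_shrink; rewrite -?memAE.
- by rewrite eE (completion_arcs_meet uA (negbT vA)) /completion_arc uA vA.
- rewrite eE arcs_meetC (completion_arcs_meet vA (negbT uA)).
  by rewrite /completion_arc uA vA arcs_meetC.
- split=> _ //; exists (1 / 2).
  split; apply: on_arc_half_prolong => //.
  - by case/andP: (N_model.1 u).
  - by case/andP: (N_model.1 v).
Qed.

End CompletionModel.

Theorem lemma6 (T : finType) (e : rel T) (R : realType) (M : T -> carc R)
    (p : R) :
  simple_graph e ->
  circular_arc_graph e ->
  ~ interval_graph e ->
  ca_model e M ->
  let A := [set v | `[< on_arc p (M v) >]] in
  let B := ~: A in
  cobipartite (add_clique e B) /\ circular_arc_graph (add_clique e B).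
Proof.
move=> _ _ _ M_model A B; split.
  exact/add_clique_cobipartite/clique_on_arc.
pose N v := arc_normalize p (M v).
have N_model : ca_model e N.
  split=> [v | u v uv]; first exact: M_model.1.
  by rewrite -arcs_meet_normalize; exact: M_model.2.
exists R, (completion_arc N A); apply: completion_ca_model => // v.
- exact: arc_normalize_start.
- by rewrite inE asboolE; exact: on_arc_normalize.
Qed.
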